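(* Let $(u_S,u_R)$ be an environment satisfying scant-indifferences. If commitment has no value, then there exist a partitional messaging strategy $\hat\sigma$ and a pure action strategy $\hat\rho$ such that $(\hat\sigma,\hat\rho)$ is a cheap-talk equilibrium, $U_S(\hat\sigma,\hat\rho)$ equals the persuasion payoff, and $|M_{\hat\sigma}|\le|A|$.
   Context: $A=\{a_1,\dots,a_{|A|}\}$ and $\Omega$ are finite nonempty sets, $\mu_0$ a prior on $\Omega$ with $\mu_0(\omega)>0$ for all $\omega$, and $M$ a finite message set with $|M|>\max\{|\Omega|,|A|\}$. An environment is a pair of functions $u_S,u_R:A\times\Omega\to[0,1]$. A messaging strategy is $\sigma:\Omega\to\Delta M$; an action strategy is $\rho:M\to\Delta A$; $\rho$ is pure if every $\rho(\cdot|m)$ is degenerate. $U_i(\sigma,\rho)=\sum_{\omega,m,a}\mu_0(\omega)\sigma(m|\omega)\rho(a|m)u_i(a,\omega)$. $(\sigma,\rho)$ is S-BR if $\sigma\in\arg\max_{\sigma'}U_S(\sigma',\rho)$, R-BR if $\rho\in\arg\max_{\rho'}U_R(\sigma,\rho')$; a cheap-talk equilibrium is S-BR and R-BR. The persuasion payoff is the maximum of $U_S$ over R-BR profiles; the cheap-talk payoff is the maximum of $U_S$ over cheap-talk equilibria; commitment has no value if these are equal. $\sigma$ is partitional if for every $\omega$ some $m$ has $\sigma(m|\omega)=1$. $M_\sigma=\{m:\sigma(m|\omega)>0\text{ for some }\omega\}$. Scant-indifferences: for each $a\in A$ let $\mathbf u_S(a)=u_S(a,\cdot)\in\mathbb R^{|\Omega|}$,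 $\mathbf u_R(a)=u_R(a,\cdot)$. For each $i$, the expanded-indifference matrix $T^i$ has $|\Omega|$ columns and rows: $\mathbf u_S(a_j)-\mathbf u_S(a_i)$ for each $j\ne i$, then $\mathbf u_R(a_j)-\mathbf u_R(a_i)$ for each $j\ne i$, then the rows of the $|\Omega|\times|\Omega|$ identity matrix. A row-submatrix of $T^i$ is a matrix obtained by deleting some rows. The environment satisfies scant-indifferences if for every $i$ every row-submatrix of $T^i$ has full rank. *)

From HB Require Import structures.
From mathcomp Require Import all_boot all_order all_algebra.
From mathcomp Require Import boolp classical_sets reals.

Set Implicit Arguments.
Unset Strict Implicit.
Unset Printing Implicit Defensive.

Import Order.TTheory GRing.Theory Num.Theory.
Local Open Scope ring_scope.
Local Open Scope classical_set_scope.

Definition is_dist (R : realType) (T : finType) (p : T -> R) : Prop :=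
  (forall t, 0 <= p t) /\ \sum_(t : T) p t = 1.

(* Messaging strategy sigma : Omega -> Delta M, written sigma w m = sigma(m|w). *)
Definition msg_strat (R : realType) (Om M : finType) (sigma : Om -> M -> R) : Prop :=
  forall w, is_dist (sigma w).

(* Action strategy rho : M -> Delta A, written rho m a = rho(a|m). *)
Definition act_strat (R : realType) (M A : finType) (rho : M -> A -> R) : Prop :=
  forall m, is_dist (rho m).

Definition pure_strat (R : realType) (M A : finType) (rho : M -> A -> R) : Prop :=
  forall m, exists a, forall a', rho m a' = (a' == a)%:R.

Definition partitional (R : realType) (Om M : finType) (sigma : Om -> M -> R) : Prop :=
  forall w, exists m, sigma w m = 1.

Definition used_msgs (R : realType) (Om M : finType) (sigma : Om -> M -> R) : {set M} :=
  [set m | [exists w, 0 < sigma w m]].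

Definition U (R : realType) (A Om M : finType) (mu0 : Om -> R) (u : A -> Om -> R)
  (sigma : Om -> M -> R) (rho : M -> A -> R) : R :=
  \sum_(w : Om) \sum_(m : M) \sum_(a : A) mu0 w * sigma w m * rho m a * u a w.

Definition S_BR (R : realType) (A Om M : finType) (mu0 : Om -> R) (uS : A -> Om -> R)
  (sigma : Om -> M -> R) (rho : M -> A -> R) : Prop :=
  [/\ msg_strat sigma, act_strat rho &
      forall sigma' : Om -> M -> R, msg_strat sigma' ->
        U mu0 uS sigma' rho <= U mu0 uS sigma rho].

Definition R_BR (R : realType) (A Om M : finType) (mu0 : Om -> R) (uR : A -> Om -> R)
  (sigma : Om -> M -> R) (rho : M -> A -> R) : Prop :=
  [/\ msg_strat sigma, act_strat rho &
      forall rho' : M -> A -> R, act_strat rho' ->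
        U mu0 uR sigma rho' <= U mu0 uR sigma rho].

Definition cheap_talk_eq (R : realType) (A Om M : finType) (mu0 : Om -> R)
  (uS uR : A -> Om -> R) (sigma : Om -> M -> R) (rho : M -> A -> R) : Prop :=
  S_BR mu0 uS sigma rho /\ R_BR mu0 uR sigma rho.

(* Persuasion payoff: the maximum (= supremum, which is attained) of U_S over
   R-BR profiles, with message set M. *)
Definition persuasion_payoff (R : realType) (A Om M : finType) (mu0 : Om -> R)
  (uS uR : A -> Om -> R) : R :=
  sup [set x : R | exists (sigma : Om -> M -> R) (rho : M -> A -> R),
                     R_BR mu0 uR sigma rho /\ x = U mu0 uS sigma rho].

Definition cheap_talk_payoff (R : realType) (A Om M : finType) (mu0 : Om -> R)
  (uS uR : A -> Om -> R) : R :=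
  sup [set x : R | exists (sigma : Om -> M -> R) (rho : M -> A -> R),
                     cheap_talk_eq mu0 uS uR sigma rho /\ x = U mu0 uS sigma rho].

(* Rows of the expanded-indifference matrix T^i, indexed by
   inl (j, false) : u_S(a_j) - u_S(a_i)   (j <> i)
   inl (j, true)  : u_R(a_j) - u_R(a_i)   (j <> i)
   inr w          : the identity row e_w. *)
Definition T_entry (R : realType) (A Om : finType) (uS uR : A -> Om -> R) (i : A)
  (r : (A * bool) + Om) (w' : Om) : R :=
  match r with
  | inl (j, false) => uS j w' - uS i w'
  | inl (j, true) => uR j w' - uR i w'
  | inr w => (w == w')%:R
  end.

Definition T_rows (A Om : finType) (i : A) : {set (A * bool) + Om} :=
  [set r | match r with inl (j, _) => j != i | inr _ => true end].

Definition T_sub (R : realType) (A Om : finType) (uS uR : A -> Om -> R) (i : A)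
  (X : {set (A * bool) + Om}) : 'M[R]_(#|X|, #|Om|) :=
  \matrix_(k < #|X|, l < #|Om|) T_entry uS uR i (enum_val k) (enum_val l).

Definition scant_indifferences (R : realType) (A Om : finType)
  (uS uR : A -> Om -> R) : Prop :=
  forall (i : A) (X : {set (A * bool) + Om}), X \subset T_rows Om i ->
    \rank (T_sub uS uR i X) = minn #|X| #|Om|.

(* Take a sender-optimal cheap-talk equilibrium, which exists by compactness;
   when commitment has no value it attains the persuasion payoff V.  Any
   decomposition of the prior into obedient pieces is implementable by a
   receiver best response, so it is worth at most V to the sender.  Hence the
   part of the prior sent with a message cannot be re-split obediently to the
   sender's advantage: all actions played after a message are equally good for
   the sender, and under scant indifferences a used message has a pure reply,
   for otherwise a small perturbation along a direction in the kernel of the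
   tight indifference rows would gain.  Scant indifferences also make the
   sender's preferences strict, so all messages sent in a state induce the same
   action; sending one message per induced action gives a partitional, pure
   equilibrium with the same payoff and at most |A| messages. *)

From HB Require Import structures.
From mathcomp Require Import all_boot all_order all_algebra.
From mathcomp Require Import boolp classical_sets reals.
From mathcomp Require Import ring lra.
From mathcomp Require Import topology normedtype derive.

Import Order.TTheory GRing.Theory Num.Theory.
Import numFieldNormedType.Exports.
Local Open Scope ring_scope.

Set Implicit Arguments.
Unset Strict Implicit.
Unset Printing Implicit Defensive.

Section Distributions.
Variables (R : realType) (T : finType).
Implicit Types (p g : T -> R) (x y t : T).

Definition dot (p g : T -> R) : R := \sum_t p t * g t.

Lemma dotC p g : dot p g = dot g p.
Proof. by apply: eq_bigr => t _; rewrite mulrC. Qed.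

Lemma dotZl (k : R) p g : dot (fun t => k * p t) g = k * dot p g.
Proof. by rewrite /dot mulr_sumr; apply: eq_bigr => t _; rewrite mulrA. Qed.

Lemma dotNl p g : dot (fun t => - p t) g = - dot p g.
Proof. by rewrite /dot -sumrN; apply: eq_bigr => t _; rewrite mulNr. Qed.

Lemma dotDl p1 p2 g : dot (fun t => p1 t + p2 t) g = dot p1 g + dot p2 g.
Proof. by rewrite /dot -big_split; apply: eq_bigr => t _; rewrite mulrDl. Qed.

Lemma dotBr p g1 g2 : dot p (fun t => g1 t - g2 t) = dot p g1 - dot p g2.
Proof. by rewrite /dot -sumrB; apply: eq_bigr => t _; rewrite mulrBr. Qed.

Lemma dot_delta p x : dot p (fun t => (t == x)%:R) = p x.
Proof.
rewrite /dot (bigD1 x) //= eqxx mulr1 big1 ?addr0 // => t /negbTE ->.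
by rewrite mulr0.
Qed.

Lemma sum_delta x (c : R) : \sum_t (t == x)%:R * c = c.
Proof.
rewrite (bigD1 x) //= eqxx mul1r big1 ?addr0 // => t /negbTE ->.
by rewrite mul0r.
Qed.

Lemma sum_update (F : T -> R) x (c : R) :
  \sum_t (if t == x then c else F t) = \sum_t F t + (c - F x).
Proof.
rewrite (bigD1 x) //= eqxx [in RHS](bigD1 x) //= (eq_bigr F); first by ring.
by move=> t /negbTE ->.
Qed.

Lemma is_dist_delta x : is_dist (fun t => (t == x)%:R : R).
Proof.
split=> [t|]; first by rewrite ler0n.
by rewrite -[RHS](sum_delta x); apply: eq_bigr => t _; rewrite mulr1.
Qed.

Lemma is_dist_exists_gt0 p : is_dist p -> exists t, 0 < p t.
Proof.
move=> [p_ge0 p_sum]; apply/not_existsP => p_le0.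
have : \sum_t p t = 0.
  by apply: big1 => t _; apply/eqP; rewrite eq_le p_ge0 andbT leNgt; apply/negP/p_le0.
by rewrite p_sum => /eqP; rewrite oner_eq0.
Qed.

Lemma is_dist_le1 p t : is_dist p -> p t <= 1.
Proof. by move=> [p_ge0 <-]; rewrite (bigD1 t) //= lerDl sumr_ge0. Qed.

Lemma is_dist_eq0 p t : is_dist p -> ~~ (0 < p t) -> p t = 0.
Proof. by move=> [p_ge0 _] p_le0; apply/eqP; rewrite eq_le p_ge0 andbT leNgt. Qed.

Lemma sum_neq_mul x (F : T -> R) : \sum_t (t != x)%:R * F t = \sum_t F t - F x.
Proof.
rewrite (bigD1 x) //= eqxx mul0r add0r [in RHS](bigD1 x) //= addrAC subrr add0r.
by apply: eq_bigr => t ->; rewrite mul1r.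
Qed.

Lemma dot_const_on_support p G (c : R) :
  is_dist p -> (forall t, 0 < p t -> G t = c) -> dot p G = c.
Proof.
move=> p_dist G_c; rewrite -[RHS]mul1r -p_dist.2 mulr_suml; apply: eq_bigr => t _.
have [/G_c -> //|p_le0] := ltP 0 (p t).
by rewrite (is_dist_eq0 p_dist) ?mul0r // -leNgt.
Qed.

Lemma dot_le_of_dist p G (c : R) : is_dist p -> (forall t, G t <= c) -> dot p G <= c.
Proof.
move=> p_dist G_le; rewrite -[X in _ <= X]mul1r -p_dist.2 mulr_suml.
by apply: ler_sum => t _; rewrite ler_wpM2l // p_dist.1.
Qed.

Definition shift_mass p x y : T -> R :=
  fun t => p t + (t == y)%:R * p x - (t == x)%:R * p x.

Lemma is_dist_shift_mass p x y : is_dist p -> is_dist (shift_mass p x y).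
Proof.
move=> [p_ge0 p_sum]; split=> [t|].
  rewrite /shift_mass; have [->|t_x] := eqVneq t x.
    by rewrite mul1r addrAC subrr add0r mulr_ge0 ?ler0n.
  by rewrite mul0r subr0 addr_ge0 ?mulr_ge0 ?ler0n.
by rewrite /shift_mass sumrB big_split /= !sum_delta p_sum addrK.
Qed.

Lemma dot_shift_mass p x y g :
  dot (shift_mass p x y) g = dot p g + p x * (g y - g x).
Proof.
have -> : dot (shift_mass p x y) g =
    \sum_t (p t * g t + ((t == y)%:R * (p x * g y) - (t == x)%:R * (p x * g x))).
  by apply: eq_bigr => t _; rewrite /shift_mass; do 2 case: eqP => [->|_] /=; ring.
by rewrite big_split /= sumrB !sum_delta mulrBr.
Qed.

End Distributions.

Lemma shift_mass_unprofitable (R : realType) (I T : finType) (p F : I -> T -> R)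
    (i : I) (x y : T) :
  0 < p i x ->
  \sum_j dot (if j == i then shift_mass (p i) x y else p j) (F j) <= \sum_j dot (p j) (F j) ->
  F i y <= F i x.
Proof.
move=> p_gt0; rewrite (eq_bigr (fun j => if j == i then dot (shift_mass (p i) x y) (F i)
                                         else dot (p j) (F j))); last first.
  by move=> j _; case: eqP => [->|].
rewrite sum_update dot_shift_mass addrAC subrr add0r gerDl.
by rewrite pmulr_rle0 // subr_le0.
Qed.

Section Game.
Variables (R : realType) (A Om M : finType) (mu0 : Om -> R) (uS uR : A -> Om -> R).
Implicit Types (sigma : Om -> M -> R) (rho : M -> A -> R) (u : A -> Om -> R) (q : Om -> R).

Definition joint sigma (m : M) : Om -> R := fun w => mu0 w * sigma w m.

Definition msg_util rho u (m : M) (w : Om) : R := dot (rho m) (u^~ w).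

Definition obedient q (a : A) : Prop := forall c, dot q (uR c) <= dot q (uR a).

Lemma U_by_state u sigma rho :
  U mu0 u sigma rho = \sum_w dot (sigma w) (fun m => mu0 w * msg_util rho u m w).
Proof.
apply: eq_bigr => w _; rewrite /dot; apply: eq_bigr => m _.
by rewrite /msg_util /dot !mulr_sumr; apply: eq_bigr => a _; ring.
Qed.

Lemma U_by_msg u sigma rho :
  U mu0 u sigma rho = \sum_m dot (rho m) (fun a => dot (joint sigma m) (u a)).
Proof.
rewrite /U exchange_big; apply: eq_bigr => m _.
rewrite exchange_big; apply: eq_bigr => a _.
by rewrite /dot /joint mulr_sumr; apply: eq_bigr => w _; ring.
Qed.

Lemma obedientZ (k : R) q a : 0 <= k -> obedient q a -> obedient (fun w => k * q w) a.
Proof. by move=> k_ge0 qa c; rewrite !dotZl ler_wpM2l. Qed.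

Lemma obedient_sum (J : finType) (P : pred J) (qf : J -> Om -> R) a :
  (forall j, P j -> obedient (qf j) a) -> obedient (fun w => \sum_(j | P j) qf j w) a.
Proof.
move=> qfa c; rewrite /dot.
under eq_bigr do rewrite mulr_suml.
under [X in _ <= X]eq_bigr do rewrite mulr_suml.
by rewrite exchange_big [X in _ <= X]exchange_big; apply: ler_sum => j /qfa; apply.
Qed.

Lemma RBR_obedient sigma rho m a :
  R_BR mu0 uR sigma rho -> 0 < rho m a -> obedient (joint sigma m) a.
Proof.
move=> [_ rho_act rho_best] rho_gt0 c.
pose rho' m' := if m' == m then shift_mass (rho m) a c else rho m'.
have rho'_act : act_strat rho'.
  by move=> m'; rewrite /rho'; case: eqP => _; [apply: is_dist_shift_mass|].
apply: (shift_mass_unprofitable (F := fun m b => dot (joint sigma m) (uR b)) rho_gt0).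
by have := rho_best _ rho'_act; rewrite !U_by_msg.
Qed.

Lemma RBR_obedient_weighted sigma rho m a :
  R_BR mu0 uR sigma rho -> obedient (fun w => rho m a * joint sigma m w) a.
Proof.
move=> rho_best; have [rho_ma_gt0|rho_ma_le0] := ltP 0 (rho m a).
  by apply: obedientZ; [exact: ltW | exact: (RBR_obedient rho_best)].
have [_ rho_act _] := rho_best.
have -> : rho m a = 0 by apply/eqP; rewrite eq_le rho_ma_le0 (rho_act m).1.
by move=> c; rewrite !dotZl !mul0r.
Qed.

Lemma SBR_best_msg sigma rho w m :
  S_BR mu0 uS sigma rho -> 0 < mu0 w -> 0 < sigma w m ->
  forall m', msg_util rho uS m' w <= msg_util rho uS m w.
Proof.
move=> [sigma_msg _ sigma_best] mu0_gt0 sigma_gt0 m'.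
pose sigma' w' := if w' == w then shift_mass (sigma w) m m' else sigma w'.
have sigma'_msg : msg_strat sigma'.
  by move=> w'; rewrite /sigma'; case: eqP => _; [apply: is_dist_shift_mass|].
suff : mu0 w * msg_util rho uS m' w <= mu0 w * msg_util rho uS m w by rewrite ler_pM2l.
apply: (shift_mass_unprofitable (F := fun w m => mu0 w * msg_util rho uS m w) sigma_gt0).
by have := sigma_best _ sigma'_msg; rewrite !U_by_state.
Qed.

Lemma RBR_of_obedient sigma rho :
  msg_strat sigma -> act_strat rho ->
  (forall m a, 0 < rho m a -> obedient (joint sigma m) a) -> R_BR mu0 uR sigma rho.
Proof.
move=> sigma_msg rho_act rho_ob; split=> // rho' rho'_act; rewrite !U_by_msg.
apply: ler_sum => m _; have [a rho_ma_gt0] := is_dist_exists_gt0 (rho_act m).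
pose G b := dot (joint sigma m) (uR b).
have G_max c : G c <= G a by apply: rho_ob.
rewrite (@dot_const_on_support _ _ _ _ (G a) (rho_act m)); last first.
  by move=> c rho_mc_gt0; apply/eqP; rewrite eq_le G_max rho_ob.
exact: dot_le_of_dist (rho'_act m) G_max.
Qed.

Lemma U_le1 u sigma rho :
  (forall w, 0 <= mu0 w) -> \sum_w mu0 w = 1 -> (forall a w, u a w <= 1) ->
  msg_strat sigma -> act_strat rho -> U mu0 u sigma rho <= 1.
Proof.
move=> mu0_ge0 mu0_sum u_le1 sigma_msg rho_act; rewrite U_by_state -mu0_sum.
apply: ler_sum => w _; apply: dot_le_of_dist (sigma_msg w) _ => m.
by rewrite ler_piMr // dot_le_of_dist.
Qed.

End Game.

Section PersuasionBound.
Variables (R : realType) (A Om M : finType) (mu0 : Om -> R) (uS uR : A -> Om -> R).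
Variable a0 : A.
Hypothesis card_A_le_M : (#|A| <= #|M|)%N.
Hypothesis mu0_gt0 : forall w, 0 < mu0 w.
Variable V : R.
Hypothesis V_ub : forall (sigma : Om -> M -> R) (rho : M -> A -> R),
  R_BR mu0 uR sigma rho -> U mu0 uS sigma rho <= V.

Definition emb (a : A) : M := enum_val (widen_ord card_A_le_M (enum_rank a)).

Lemma emb_inj : injective emb.
Proof. by move=> a b /enum_val_inj /(congr1 val) /= /val_inj /enum_rank_inj. Qed.

Definition emb_inv (m : M) : A := odflt a0 [pick a | emb a == m].

Lemma emb_invK : cancel emb emb_inv.
Proof. by move=> a; rewrite /emb_inv; case: pickP => [b /eqP /emb_inj //|/(_ a)]; rewrite eqxx. Qed.

(* Recommending the actions [act j] with the pooled beliefs is an R-BR profile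
   once all pieces recommending the same action share the message [emb] of it. *)
Lemma obedient_decomposition_le (J : finType) (qf : J -> Om -> R) (act : J -> A) :
  (forall j w, 0 <= qf j w) -> (forall w, \sum_j qf j w = mu0 w) ->
  (forall j, obedient uR (qf j) (act j)) ->
  \sum_j dot (qf j) (uS (act j)) <= V.
Proof.
move=> qf_ge0 qf_sum qf_ob.
pose pool m w := \sum_(j | emb (act j) == m) qf j w.
pose sigma w m := pool m w / mu0 w.
pose rho m c := (c == emb_inv m)%:R : R.
have joint_sigma m : joint mu0 sigma m = pool m.
  by apply: funext => w; rewrite /joint /sigma mulrC divfK // gt_eqF.
have pool_sum w : \sum_m pool m w = mu0 w.
  by rewrite -qf_sum [RHS](partition_big (fun j => emb (act j)) xpredT).
have sigma_msg : msg_strat sigma.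
  move=> w; split=> [m|]; first by rewrite divr_ge0 ?sumr_ge0 // ltW.
  by rewrite -mulr_suml pool_sum divff // gt_eqF.
have rho_act : act_strat rho by move=> m; apply: is_dist_delta.
have sigma_rho_RBR : R_BR mu0 uR sigma rho.
  apply: RBR_of_obedient => // m c; rewrite /rho; case: eqP => [-> _|]; last by rewrite ltxx.
  by rewrite joint_sigma; apply: obedient_sum => j /eqP <-; rewrite emb_invK.
apply: le_trans (V_ub sigma_rho_RBR); rewrite U_by_msg.
rewrite (partition_big (fun j => emb (act j)) xpredT) //=; apply: ler_sum => m _.
rewrite dotC dot_delta joint_sigma /pool /dot.
under [X in _ <= X]eq_bigr do rewrite mulr_suml.
by rewrite [X in _ <= X]exchange_big /=; apply: ler_sum => j /eqP <-; rewrite emb_invK.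
Qed.

End PersuasionBound.

Section ScantIndifferences.
Variables (R : realType) (A Om : finType) (uS uR : A -> Om -> R).
Hypothesis scant : scant_indifferences uS uR.
Implicit Types (x : Om -> R) (X : {set (A * bool) + Om}).

Lemma T_rowS i b x :
  \sum_w T_entry uS uR i (inl (b, false)) w * x w = dot x (uS b) - dot x (uS i).
Proof. by rewrite -dotBr dotC. Qed.

Lemma T_rowR i c x :
  \sum_w T_entry uS uR i (inl (c, true)) w * x w = dot x (uR c) - dot x (uR i).
Proof. by rewrite -dotBr dotC. Qed.

Lemma T_rowI i v x : \sum_w T_entry uS uR i (inr v) w * x w = x v.
Proof. by rewrite -[RHS](dot_delta x) dotC; apply: eq_bigr => w _; rewrite /= eq_sym. Qed.

Lemma sum_enum_val (F : Om -> R) : \sum_(l < #|Om|) F (enum_val l) = \sum_w F w.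
Proof. by rewrite -(big_enum_val (A := Om)). Qed.

Lemma scant_kernel_card_lt i X x :
  X \subset T_rows Om i -> (exists w, x w != 0) ->
  (forall r, r \in X -> \sum_w T_entry uS uR i r w * x w = 0) ->
  (#|X| < #|Om|)%N.
Proof.
move=> X_sub [w0 x_w0] x_ker; rewrite ltnNge; apply/negP => card_ge.
have T_free : row_free (T_sub uS uR i X)^T.
  by rewrite /row_free mxrank_tr scant //; apply/eqP/minn_idPr.
pose xc : 'cV[R]_#|Om| := \col_l x (enum_val l).
have : xc^T *m (T_sub uS uR i X)^T == 0.
  rewrite -trmx_mul; apply/eqP/matrixP => j k; rewrite !mxE.
  under eq_bigr do rewrite !mxE.
  by rewrite (sum_enum_val (fun w => T_entry uS uR i (enum_val k) w * x w)) x_ker ?enum_valP.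
rewrite mulmx_free_eq0 // => /eqP /matrixP /(_ 0 (enum_rank w0)).
by rewrite !mxE enum_rankK => x_w0_eq0; rewrite x_w0_eq0 eqxx in x_w0.
Qed.

Lemma scant_solvable i X (tf : (A * bool) + Om -> R) :
  X \subset T_rows Om i -> (#|X| <= #|Om|)%N ->
  exists d : Om -> R, forall r, r \in X -> \sum_w T_entry uS uR i r w * d w = tf r.
Proof.
move=> X_sub card_le.
have T_full : row_full (T_sub uS uR i X)^T.
  by rewrite /row_full mxrank_tr scant //; apply/eqP/minn_idPl.
pose tr : 'rV[R]_#|X| := \row_k tf (enum_val k).
have /submxP [D tr_eq] : (tr <= (T_sub uS uR i X)^T)%MS by apply: submx_full.
exists (fun w => D 0 (enum_rank w)) => r r_X.
move/matrixP: tr_eq => /(_ 0 (enum_rank_in r_X r)); rewrite !mxE (enum_rankK_in r_X r_X) => ->.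
rewrite -(sum_enum_val (fun w => T_entry uS uR i r w * D 0 (enum_rank w))).
by apply: eq_bigr => l _; rewrite !mxE enum_valK (enum_rankK_in r_X r_X) mulrC.
Qed.

(* The point mass at [w] is orthogonal to the |Om| rows
   [u_S(b) - u_S(a)] and [e_w'] (w' != w), so they cannot have full rank. *)
Lemma scant_strict_pref a b w : a != b -> uS a w != uS b w.
Proof.
move=> a_b; apply/negP => /eqP uS_ab.
pose X : {set (A * bool) + Om} := inl (b, false) |: [set inr w' | w' in [set~ w]].
have X_sub : X \subset T_rows Om a.
  apply/fintype.subsetP => r; rewrite !inE => /orP[/eqP ->|/imsetP [w' _ ->]] //.
  by rewrite eq_sym.
have X_card : #|X| = #|Om|.
  rewrite cardsU1 card_imset; last by move=> ? ? [].
  have -> : inl (b, false) \notin [set inr w' | w' in [set~ w]] by apply/imsetP => -[].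
  by rewrite cardsC1 add1n prednK //; apply/card_gt0P; exists w.
suff : (#|X| < #|Om|)%N by rewrite X_card ltnn.
apply: (scant_kernel_card_lt (x := fun w' => (w' == w)%:R) X_sub) => [|r].
  by exists w; rewrite eqxx oner_eq0.
rewrite !inE => /orP[/eqP ->|/imsetP [w' w'_w ->]].
  by rewrite T_rowS !(dotC _ (uS _)) !dot_delta uS_ab subrr.
by rewrite T_rowI; move: w'_w; rewrite !inE => /negbTE ->.
Qed.

(* [q] is a nonzero kernel vector of the rows of [T^a] that [del] has to
   solve, so by scant indifferences there are fewer than |Om| of them. *)
Lemma scant_direction (q : Om -> R) (a b : A) :
  a != b -> (exists w, q w != 0) -> dot q (uS b) = dot q (uS a) ->
  exists del : Om -> R,
    [/\ forall w, q w = 0 -> del w = 0,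
        dot del (uS b) - dot del (uS a) = 1
      & forall c, dot q (uR c) = dot q (uR a) ->
          dot del (uR c) - dot del (uR a) = (c == b)%:R].
Proof.
move=> a_b q_nz q_Sab.
pose tight := [set c | (dot q (uR c) == dot q (uR a)) && (c != a)].
pose X : {set (A * bool) + Om} :=
  [set inl (c, true) | c in tight] :|: [set inl (b, false)] :|:
  [set inr w | w in [set w | q w == 0]].
have X_sub : X \subset T_rows Om a.
  apply/fintype.subsetP => r; rewrite !inE => /orP[/orP[/imsetP [c]|/eqP ->]|/imsetP [w _ ->]] //.
    by rewrite inE => /andP[_ c_a] ->.
  by rewrite eq_sym.
have q_ker r : r \in X -> \sum_w T_entry uS uR a r w * q w = 0.
  rewrite !inE => /orP[/orP[/imsetP [c]|/eqP ->]|/imsetP [w]]; rewrite ?inE.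
  - by move=> /andP[/eqP q_c _] ->; rewrite T_rowR q_c subrr.
  - by rewrite T_rowS q_Sab subrr.
  - by move=> /eqP q_w ->; rewrite T_rowI.
have [del del_sol] := scant_solvable
  (fun r => match r with inl (c, _) => (c == b)%:R | inr _ => 0 end) X_sub
  (ltnW (scant_kernel_card_lt X_sub q_nz q_ker)).
exists del; split.
- move=> w q_w; have := del_sol (inr w); rewrite T_rowI; apply.
  by rewrite !inE; apply/orP; right; apply/imsetP; exists w; rewrite ?inE ?q_w.
- have := del_sol (inl (b, false)); rewrite T_rowS eqxx; apply.
  by rewrite !inE eqxx orbT.
- move=> c q_c; have [->|c_a] := eqVneq c a; first by rewrite subrr (negbTE a_b).
  have := del_sol (inl (c, true)); rewrite T_rowR; apply.
  rewrite !inE; apply/orP; left; apply/orP; left.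
  by apply/imsetP; exists c; rewrite ?inE ?q_c ?eqxx.
Qed.

End ScantIndifferences.

Section ObedientPerturbation.
Variables (R : realType) (A Om : finType) (uR : A -> Om -> R).
Hypothesis uR_01 : forall a w, 0 <= uR a w <= 1.

Lemma dot_utility_gap (del : Om -> R) c c' :
  `|dot del (uR c) - dot del (uR c')| <= \sum_w `|del w|.
Proof.
rewrite -dotBr; apply: le_trans (ler_norm_sum _ _ _) _; apply: ler_sum => w _.
rewrite normrM ler_piMr // ler_norml.
by have := uR_01 c w; have := uR_01 c' w; lra.
Qed.

(* Inequalities that are strict at [q] survive a small step along [del]; the
   tight ones are those for which the hypotheses control the sign of the step. *)
Lemma obedient_perturb (q del : Om -> R) (a : A) :
  (forall w, 0 <= q w) -> obedient uR q a -> (forall w, q w = 0 -> del w = 0) ->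
  (forall c, dot q (uR c) = dot q (uR a) -> dot del (uR c) <= dot del (uR a)) ->
  exists2 eps : R, 0 < eps & forall e, 0 <= e <= eps ->
    (forall w, 0 <= q w + e * del w) /\ obedient uR (fun w => q w + e * del w) a.
Proof.
move=> q_ge0 q_ob del_supp del_tight.
pose D := 1 + \sum_w `|del w|.
have D_gt0 : 0 < D by rewrite ltr_pwDl // sumr_ge0.
have [g1 g1_gt0 g1_le] : exists2 g1 : R, 0 < g1 & forall w, 0 < q w -> g1 <= q w.
  exists (\big[Order.min/1]_(w | 0 < q w) q w); first exact: lt_bigmin.
  by move=> w; apply: bigmin_le_cond.
have [g2 g2_gt0 g2_le] : exists2 g2 : R, 0 < g2 &
    forall c, dot q (uR c) < dot q (uR a) -> g2 <= dot q (uR a) - dot q (uR c).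
  exists (\big[Order.min/1]_(c | dot q (uR c) < dot q (uR a)) (dot q (uR a) - dot q (uR c))).
    by apply: lt_bigmin => // c; rewrite subr_gt0.
  by move=> c; apply: bigmin_le_cond.
exists (Order.min g1 g2 / D); first by rewrite divr_gt0 // lt_min g1_gt0.
move=> e /andP[e_ge0 e_le].
have eD_le : e * D <= Order.min g1 g2 by rewrite -ler_pdivlMr.
have [eD_g1 eD_g2] : e * D <= g1 /\ e * D <= g2 by move: eD_le; rewrite le_min => /andP[].
have step_small (x : R) : `|x| <= D -> - (e * D) <= e * x <= e * D.
  by rewrite -ler_norml normrM ger0_norm // => /(ler_wpM2l e_ge0).
split=> [w|c].
  have [q_w_gt0|] := ltP 0 (q w); last first.
    by rewrite le_eqVlt ltNge q_ge0 orbF => /eqP /del_supp ->; rewrite mulr0 addr0.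
  have : `|del w| <= D.
    rewrite /D (bigD1 w) //=.
    have : 0 <= \sum_(i | i != w) `|del i| by apply: sumr_ge0.
    lra.
  by move=> /step_small; have := g1_le w q_w_gt0; lra.
rewrite !dotDl !dotZl; have [tight|] := eqVneq (dot q (uR c)) (dot q (uR a)).
  by rewrite tight lerD2l ler_wpM2l // del_tight.
move=> untight; have q_lt : dot q (uR c) < dot q (uR a) by rewrite lt_neqAle untight q_ob.
have : `|dot del (uR c) - dot del (uR a)| <= D.
  by rewrite (le_trans (dot_utility_gap _ _ _)) // lerDr.
by move=> /step_small; rewrite mulrBr; have := g2_le c q_lt; lra.
Qed.

Lemma obedient_split_perturb (q del : Om -> R) (a b : A) :
  (forall w, 0 <= q w) -> obedient uR q a -> obedient uR q b ->
  (forall w, q w = 0 -> del w = 0) ->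
  (forall c, dot q (uR c) = dot q (uR a) -> dot del (uR a) <= dot del (uR c) <= dot del (uR b)) ->
  exists2 e : R, 0 < e &
    [/\ forall w, 0 <= q w - e * del w, forall w, 0 <= q w + e * del w,
        obedient uR (fun w => q w - e * del w) a & obedient uR (fun w => q w + e * del w) b].
Proof.
move=> q_ge0 q_ob_a q_ob_b del_supp del_tight.
have q_ab : dot q (uR b) = dot q (uR a) by apply/eqP; rewrite eq_le q_ob_a q_ob_b.
have [eps_a eps_a_gt0 step_a] : exists2 eps : R, 0 < eps & forall e, 0 <= e <= eps ->
    (forall w, 0 <= q w + e * - del w) /\ obedient uR (fun w => q w + e * - del w) a.
  apply: (obedient_perturb q_ge0 q_ob_a) => [w /del_supp ->|c /del_tight /andP[del_ac _]].
    by rewrite oppr0.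
  by rewrite !dotNl lerN2.
have [eps_b eps_b_gt0 step_b] : exists2 eps : R, 0 < eps & forall e, 0 <= e <= eps ->
    (forall w, 0 <= q w + e * del w) /\ obedient uR (fun w => q w + e * del w) b.
  apply: (obedient_perturb q_ge0 q_ob_b del_supp) => c.
  by rewrite q_ab => /del_tight /andP[].
pose e := Order.min eps_a eps_b.
have e_gt0 : 0 < e by rewrite lt_min eps_a_gt0.
have e_le_a : 0 <= e <= eps_a by rewrite ltW //= ge_min lexx.
have e_le_b : 0 <= e <= eps_b by rewrite ltW //= ge_min lexx orbT.
have [ge0_a ob_a] := step_a e e_le_a.
have [ge0_b ob_b] := step_b e e_le_b.
have minus_eq : (fun w => q w - e * del w) = (fun w => q w + e * - del w).
  by apply: funext => w; rewrite mulrN.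
exists e => //.
by rewrite minus_eq; split=> // w; rewrite -mulrN ge0_a.
Qed.

End ObedientPerturbation.

Section OptimalEquilibrium.
Variables (R : realType) (A Om M : finType) (mu0 : Om -> R) (uS uR : A -> Om -> R).
Variable a0 : A.
Hypothesis card_A_le_M : (#|A| <= #|M|)%N.
Hypothesis mu0_gt0 : forall w, 0 < mu0 w.
Hypothesis uR_01 : forall a w, 0 <= uR a w <= 1.
Hypothesis scant : scant_indifferences uS uR.
Variable V : R.
Hypothesis V_ub : forall (sigma : Om -> M -> R) (rho : M -> A -> R),
  R_BR mu0 uR sigma rho -> U mu0 uS sigma rho <= V.
Variables (sigma : Om -> M -> R) (rho : M -> A -> R).
Hypothesis eq_CT : cheap_talk_eq mu0 uS uR sigma rho.
Hypothesis eq_V : U mu0 uS sigma rho = V.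

Let sigma_msg : msg_strat sigma. Proof. by case: eq_CT => [[]]. Qed.
Let rho_act : act_strat rho. Proof. by case: eq_CT => [[]]. Qed.
Let eq_SBR : S_BR mu0 uS sigma rho. Proof. by case: eq_CT. Qed.
Let eq_RBR : R_BR mu0 uR sigma rho. Proof. by case: eq_CT. Qed.

Local Notation q := (joint mu0 sigma).

Definition msg_value (m : M) : R := dot (rho m) (fun a => dot (q m) (uS a)).

Lemma joint_ge0 m w : 0 <= q m w.
Proof. by apply: mulr_ge0; [exact: ltW | exact: (sigma_msg w).1]. Qed.

Lemma sum_joint w : \sum_m q m w = mu0 w.
Proof. by rewrite -mulr_sumr (sigma_msg w).2 mulr1. Qed.

(* The other messages keep their (action-by-action) obedient pieces, so the
   whole family is an obedient decomposition of the prior. *)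
Lemma obedient_split_le (J : finType) (m : M) (qf : J -> Om -> R) (act : J -> A) :
  (forall j w, 0 <= qf j w) -> (forall w, \sum_j qf j w = q m w) ->
  (forall j, obedient uR (qf j) (act j)) ->
  \sum_j dot (qf j) (uS (act j)) <= msg_value m.
Proof.
move=> qf_ge0 qf_sum qf_ob.
pose qf' (i : (M * A) + J) : Om -> R := match i with
  | inl p => fun w => (p.1 != m)%:R * (rho p.1 p.2 * q p.1 w) | inr j => qf j end.
pose act' (i : (M * A) + J) : A := match i with inl p => p.2 | inr j => act j end.
have qf'_ge0 i w : 0 <= qf' i w.
  case: i => [[m' c]|j] /=; last exact: qf_ge0.
  by rewrite mulr_ge0 ?ler0n // mulr_ge0 ?(rho_act m').1 ?joint_ge0.
have qf'_sum w : \sum_i qf' i w = mu0 w.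
  rewrite big_sumType /= qf_sum.
  rewrite -(pair_bigA _ (fun m' c => (m' != m)%:R * (rho m' c * q m' w))) /=.
  under eq_bigr do rewrite -mulr_sumr -mulr_suml (rho_act _).2 mul1r.
  by rewrite sum_neq_mul subrK sum_joint.
have qf'_ob i : obedient uR (qf' i) (act' i).
  case: i => [[m' c]|j] /=; last exact: qf_ob.
  by apply: obedientZ; [exact: ler0n | exact: RBR_obedient_weighted].
have := obedient_decomposition_le a0 card_A_le_M mu0_gt0 V_ub qf'_ge0 qf'_sum qf'_ob.
rewrite big_sumType /=.
rewrite -(pair_bigA _ (fun m' c => dot (fun w => (m' != m)%:R * (rho m' c * q m' w)) (uS c))) /=.
have -> : \sum_m' \sum_c dot (fun w => (m' != m)%:R * (rho m' c * q m' w)) (uS c) =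
    \sum_m' (m' != m)%:R * msg_value m'.
  apply: eq_bigr => m' _; rewrite /msg_value [in RHS]/dot mulr_sumr.
  by apply: eq_bigr => c _; rewrite !dotZl.
have -> : V = \sum_m' msg_value m' by rewrite -eq_V U_by_msg.
rewrite sum_neq_mul; lra.
Qed.

(* Recommending [b] instead of [a] on the [a]-part of [q m] stays obedient. *)
Lemma support_sender_le m a b :
  0 < rho m a -> 0 < rho m b -> dot (q m) (uS b) <= dot (q m) (uS a).
Proof.
move=> rho_ma_gt0 rho_mb_gt0.
pose act c := if c == a then b else c.
have value_act : \sum_c dot (fun w => rho m c * q m w) (uS (act c)) =
    msg_value m + rho m a * (dot (q m) (uS b) - dot (q m) (uS a)).
  rewrite (eq_bigr (fun c => if c == a then rho m a * dot (q m) (uS b)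
                             else rho m c * dot (q m) (uS c))); last first.
    by move=> c _; rewrite dotZl /act; case: eqP => [->|].
  by rewrite sum_update mulrBr.
have := @obedient_split_le A m (fun c w => rho m c * q m w) act.
rewrite value_act gerDl pmulr_rle0 // subr_le0; apply=> [c w|w|c].
- by rewrite mulr_ge0 ?(rho_act m).1 ?joint_ge0.
- by rewrite -mulr_suml (rho_act m).2 mul1r.
- rewrite /act; case: eqP => [->|_]; last exact: RBR_obedient_weighted.
  by apply: obedientZ; [exact: (rho_act m).1 | exact: RBR_obedient eq_RBR rho_mb_gt0].
Qed.

Lemma sender_indiff_support m a b :
  0 < rho m a -> 0 < rho m b -> dot (q m) (uS a) = dot (q m) (uS b).
Proof. by move=> rho_ma rho_mb; apply/eqP; rewrite eq_le !support_sender_le. Qed.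

Definition alpha (m : M) : A := odflt a0 [pick c | 0 < rho m c].

Lemma alpha_gt0 m : 0 < rho m (alpha m).
Proof.
rewrite /alpha; case: pickP => [c //|rho_m_le0].
by have [c rho_mc] := is_dist_exists_gt0 (rho_act m); move: (rho_m_le0 c); rewrite rho_mc.
Qed.

Lemma msg_value_support m a : 0 < rho m a -> msg_value m = dot (q m) (uS a).
Proof. by move=> rho_ma; apply: dot_const_on_support => // c /sender_indiff_support; apply. Qed.

(* If [a != b], [scant_direction] and [obedient_split_perturb] split [q m] into
   two obedient halves, recommending [a] and [b], worth more to the sender than [m]. *)
Lemma used_msg_pure m a b :
  (exists w, 0 < sigma w m) -> 0 < rho m a -> 0 < rho m b -> a = b.
Proof.
move=> [w0 sigma_w0m] rho_ma rho_mb; apply/eqP/negPn/negP => a_b.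
have q_nz : exists w, q m w != 0 by exists w0; rewrite mulf_neq0 // gt_eqF.
have ob_a := RBR_obedient eq_RBR rho_ma.
have ob_b := RBR_obedient eq_RBR rho_mb.
have S_ab := sender_indiff_support rho_ma rho_mb.
have [del [del_supp del_S del_R]] := scant_direction scant a_b q_nz (esym S_ab).
have del_Rb : dot del (uR b) - dot del (uR a) = 1.
  by rewrite del_R ?eqxx //; apply/eqP; rewrite eq_le ob_a ob_b.
have del_tight c : dot (q m) (uR c) = dot (q m) (uR a) ->
    dot del (uR a) <= dot del (uR c) <= dot del (uR b).
  by move=> /del_R; case: (c == b) => /=; lra.
have [e e_gt0 [ge0_a ge0_b ob_a' ob_b']] :=
  obedient_split_perturb uR_01 (joint_ge0 m) ob_a ob_b del_supp del_tight.
pose qf (s : bool) : Om -> R :=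
  if s then fun w => 2^-1 * (q m w + e * del w) else fun w => 2^-1 * (q m w - e * del w).
have qf_ge0 s w : 0 <= qf s w.
  by case: s; rewrite /qf mulr_ge0 ?invr_ge0 ?ler0n ?ge0_a ?ge0_b.
have qf_sum w : \sum_s qf s w = q m w by rewrite big_bool /=; lra.
have qf_ob s : obedient uR (qf s) (if s then b else a).
  by case: s; apply: obedientZ; rewrite ?invr_ge0 ?ler0n.
have := obedient_split_le qf_ge0 qf_sum qf_ob.
rewrite big_bool /= !dotZl !dotDl dotNl !dotZl (msg_value_support rho_ma) S_ab.
have : 0 < e * (dot del (uS b) - dot del (uS a)) by rewrite del_S mulr1.
lra.
Qed.

Lemma msg_util_used (u : A -> Om -> R) m w w' :
  0 < sigma w m -> msg_util rho u m w' = u (alpha m) w'.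
Proof.
move=> sigma_wm; apply: dot_const_on_support (rho_act m) _ => c rho_mc.
by rewrite (used_msg_pure _ rho_mc (alpha_gt0 m)) //; exists w.
Qed.

Variable w0 : Om.

Definition sent (w : Om) : M := odflt (emb card_A_le_M a0) [pick m | 0 < sigma w m].

Lemma sent_gt0 w : 0 < sigma w (sent w).
Proof.
rewrite /sent; case: pickP => [m //|sigma_w_le0].
by have [m sigma_wm] := is_dist_exists_gt0 (sigma_msg w); move: (sigma_w_le0 m); rewrite sigma_wm.
Qed.

Definition induced (w : Om) : A := alpha (sent w).

(* All messages sent in [w] are equally good for the sender, and by scant
   indifferences the sender is never indifferent between two actions. *)
Lemma alpha_used w m : 0 < sigma w m -> alpha m = induced w.
Proof.
move=> sigma_wm; apply/eqP; apply/negPn/negP => /(scant_strict_pref scant w); apply/negP.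
have := SBR_best_msg eq_SBR (mu0_gt0 w) sigma_wm (sent w).
have := SBR_best_msg eq_SBR (mu0_gt0 w) (sent_gt0 w) m.
rewrite (msg_util_used _ _ sigma_wm) (msg_util_used _ _ (sent_gt0 w)) => le1 le2.
by rewrite eq_le le1 le2.
Qed.

Lemma induced_best w w' : uS (induced w') w <= uS (induced w) w.
Proof.
have := SBR_best_msg eq_SBR (mu0_gt0 w) (sent_gt0 w) (sent w').
by rewrite (msg_util_used _ _ (sent_gt0 w')) (msg_util_used _ _ (sent_gt0 w)).
Qed.

Definition reply (m : M) : A :=
  let a := emb_inv a0 card_A_le_M m in if a \in codom induced then a else induced w0.

Lemma reply_induced m : exists w, reply m = induced w.
Proof. by rewrite /reply; case: ifP => [/codomP [w ->]|_]; eexists. Qed.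

Lemma reply_emb w : reply (emb card_A_le_M (induced w)) = induced w.
Proof. by rewrite /reply emb_invK codom_f. Qed.

Definition sigma_hat (w : Om) (m : M) : R := (m == emb card_A_le_M (induced w))%:R.

Definition rho_hat (m : M) (c : A) : R := (c == reply m)%:R.

Lemma msg_util_hat (u : A -> Om -> R) m w : msg_util rho_hat u m w = u (reply m) w.
Proof. by rewrite /msg_util /rho_hat dotC dot_delta. Qed.

Lemma U_hat (u : A -> Om -> R) :
  U mu0 u sigma_hat rho_hat = \sum_w mu0 w * u (induced w) w.
Proof.
rewrite U_by_state; apply: eq_bigr => w _.
by rewrite /sigma_hat dotC dot_delta msg_util_hat reply_emb.
Qed.

Lemma U_induced : U mu0 uS sigma rho = \sum_w mu0 w * uS (induced w) w.
Proof.
rewrite U_by_state; apply: eq_bigr => w _.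
apply: dot_const_on_support (sigma_msg w) _ => m sigma_wm.
by rewrite (msg_util_used _ _ sigma_wm) (alpha_used sigma_wm).
Qed.

Lemma sigma_hat_SBR : S_BR mu0 uS sigma_hat rho_hat.
Proof.
split=> [w|m|sigma' sigma'_msg]; [exact: is_dist_delta | exact: is_dist_delta |].
rewrite U_hat U_by_state; apply: ler_sum => w _.
apply: dot_le_of_dist (sigma'_msg w) _ => m.
by rewrite msg_util_hat ler_pM2l //; have [w' ->] := reply_induced m; apply: induced_best.
Qed.

Lemma joint_hat m w :
  joint mu0 sigma_hat m w = \sum_m' (m == emb card_A_le_M (alpha m'))%:R * q m' w.
Proof.
rewrite /joint /sigma_hat -[mu0 w in LHS]sum_joint mulr_suml; apply: eq_bigr => m' _.
have [sigma_wm'|sigma_wm'_le0] := ltP 0 (sigma w m').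
  by rewrite (alpha_used sigma_wm') mulrC.
by rewrite /joint (is_dist_eq0 (sigma_msg w)) ?mulr0 ?mul0r // -leNgt.
Qed.

Lemma sigma_hat_RBR : R_BR mu0 uR sigma_hat rho_hat.
Proof.
apply: RBR_of_obedient => [w|m|m c]; [exact: is_dist_delta | exact: is_dist_delta |].
rewrite /rho_hat; case: eqP => [-> _|_]; last by rewrite ltxx.
have -> : joint mu0 sigma_hat m = fun w => \sum_m' (m == emb card_A_le_M (alpha m'))%:R * q m' w.
  by apply: funext => w; apply: joint_hat.
apply: obedient_sum => m' _.
have [m_eq|m_neq] := eqVneq m (emb card_A_le_M (alpha m')); last first.
  by move=> c'; rewrite !dotZl !mul0r.
rewrite m_eq; apply: obedientZ => //.
case: (pickP (fun w => 0 < sigma w m')) => [w sigma_wm'|unused].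
  rewrite (alpha_used sigma_wm') reply_emb -(alpha_used sigma_wm').
  exact: RBR_obedient eq_RBR (alpha_gt0 m').
by move=> c'; rewrite /dot !big1 // => w _;
  rewrite /joint (is_dist_eq0 (sigma_msg w)) ?unused ?mulr0 ?mul0r.
Qed.

Lemma card_used_hat : (#|used_msgs sigma_hat| <= #|A|)%N.
Proof.
apply: leq_trans (leq_imset_card (emb card_A_le_M) A).
apply/subset_leq_card/fintype.subsetP => m; rewrite inE => /existsP [w].
rewrite /sigma_hat; case: eqP => [-> _|_]; last by rewrite ltxx.
by apply/imsetP; exists (induced w).
Qed.

Lemma optimal_equilibrium_simplified :
  exists (sigma' : Om -> M -> R) (rho' : M -> A -> R),
    [/\ partitional sigma', pure_strat rho', cheap_talk_eq mu0 uS uR sigma' rho',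
        U mu0 uS sigma' rho' = V & (#|used_msgs sigma'| <= #|A|)%N].
Proof.
exists sigma_hat, rho_hat; split.
- by move=> w; exists (emb card_A_le_M (induced w)); rewrite /sigma_hat eqxx.
- by move=> m; exists (reply m).
- by split; [exact: sigma_hat_SBR | exact: sigma_hat_RBR].
- by rewrite U_hat -U_induced.
- exact: card_used_hat.
Qed.

End OptimalEquilibrium.

Local Open Scope classical_set_scope.

Lemma continuous_sum (R : realType) (T : topologicalType) (I : finType) (f : I -> T -> R) :
  (forall i, continuous (f i)) -> continuous (fun x => \sum_i f i x).
Proof.
move=> f_cont x; rewrite /index_enum; elim: (Finite.enum I) => [|i s IH].
  by under eq_fun do rewrite big_nil; apply: cst_continuous.
by under eq_fun do rewrite big_cons; exact: (continuousD (f_cont i x) IH).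
Qed.

Lemma closed_le_family (R : realType) (T : topologicalType) (I : Type) (P : I -> Prop)
    (f g : I -> T -> R) :
  (forall i, continuous (f i)) -> (forall i, continuous (g i)) ->
  closed [set v | forall i, P i -> f i v <= g i v].
Proof.
move=> f_cont g_cont.
have -> : [set v | forall i, P i -> f i v <= g i v] =
    \bigcap_(i in P) ((fun v => g i v - f i v) @^-1` [set x | 0 <= x]).
  by apply/seteqP; split=> v /= v_le i /v_le; rewrite /= subr_ge0.
apply: closed_bigI => i _; apply: preimage_closed; last exact: closed_ge.
by move=> v _; apply: continuousB; [exact: g_cont | exact: f_cont].
Qed.

Lemma closed_is_dist_family (R : realType) (T : topologicalType) (I J : finType)
    (p : T -> I -> J -> R) :
  (forall i j, continuous (fun v => p v i j)) -> closed [set v | forall i, is_dist (p v i)].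
Proof.
move=> p_cont.
have sum_cont i : continuous (fun v => \sum_j p v i j) by apply: continuous_sum => j; apply: p_cont.
have -> : [set v | forall i, is_dist (p v i)] =
    [set v | forall ij : I * J, True -> 0 <= p v ij.1 ij.2] `&`
    [set v | forall i : I, True -> \sum_j p v i j <= 1] `&`
    [set v | forall i : I, True -> 1 <= \sum_j p v i j].
  apply/seteqP; split=> v /=.
    by move=> v_dist; split; [split=> [[i j]|i] _|move=> i _]; rewrite ?(v_dist i).2 ?(v_dist i).1.
  move=> [[p_ge0 p_le1] p_ge1] i; split=> [j|]; first exact: (p_ge0 (i, j)).
  by apply/eqP; rewrite eq_le p_le1 ?p_ge1.
by repeat apply: closedI; apply: closed_le_family => i;
  first [exact: cst_continuous | exact: sum_cont | exact: p_cont].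
Qed.

Lemma sup_eq_max (R : realType) (E : set R) (x : R) : E x -> ubound E x -> sup E = x.
Proof.
move=> Ex x_ub; apply/eqP; rewrite eq_le ge_sup //; last by exists x.
by apply: sup_upper_bound => //; split; exists x.
Qed.

Section OptimalEquilibriumExists.
Variables (R : realType) (A Om M : finType) (mu0 : Om -> R) (uS uR : A -> Om -> R).
Variables (a0 : A) (m0 : M).

Lemma babbling_equilibrium : exists (sigma : Om -> M -> R) (rho : M -> A -> R),
  cheap_talk_eq mu0 uS uR sigma rho.
Proof.
have [a_star _ a_star_max] := arg_maxP (fun a => dot mu0 (uR a)) (isT : xpredT a0).
pose sigma (w : Om) (m : M) := (m == m0)%:R : R.
pose rho (m : M) (c : A) := (c == a_star)%:R : R.
have sigma_msg : msg_strat sigma by move=> w; apply: is_dist_delta.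
have rho_act : act_strat rho by move=> m; apply: is_dist_delta.
have U_rho s : msg_strat s -> U mu0 uS s rho = \sum_w mu0 w * uS a_star w.
  move=> s_msg; rewrite U_by_state; apply: eq_bigr => w _.
  by apply: dot_const_on_support (s_msg w) _ => m _; rewrite /msg_util /rho dotC dot_delta.
exists sigma, rho; split; first by split=> // s s_msg; rewrite !U_rho.
apply: RBR_of_obedient => // m c; rewrite /rho; case: eqP => [-> _ c'|_]; last by rewrite ltxx.
have -> : joint mu0 sigma m = fun w => (m == m0)%:R * mu0 w.
  by apply: funext => w; rewrite /joint mulrC.
by rewrite !dotZl; apply: ler_wpM2l; [exact: ler0n | exact: a_star_max].
Qed.

Local Notation idx := ((Om * M) + (M * A))%type.
Local Notation vec := 'rV[R]_#|{: idx}|.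

Definition sigma_of (v : vec) (w : Om) (m : M) : R := v ord0 (enum_rank (inl (w, m) : idx)).
Definition rho_of (v : vec) (m : M) (a : A) : R := v ord0 (enum_rank (inr (m, a) : idx)).
Definition vec_of (sigma : Om -> M -> R) (rho : M -> A -> R) : vec :=
  \row_i match enum_val i with inl (w, m) => sigma w m | inr (m, a) => rho m a end.

Lemma sigma_ofK sigma rho : sigma_of (vec_of sigma rho) = sigma.
Proof. by apply: funext => w; apply: funext => m; rewrite /sigma_of mxE enum_rankK. Qed.

Lemma rho_ofK sigma rho : rho_of (vec_of sigma rho) = rho.
Proof. by apply: funext => m; apply: funext => a; rewrite /rho_of mxE enum_rankK. Qed.

Lemma continuous_U (T : topologicalType) (u : A -> Om -> R)
    (s : T -> Om -> M -> R) (r : T -> M -> A -> R) :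
  (forall w m, continuous (fun t => s t w m)) -> (forall m a, continuous (fun t => r t m a)) ->
  continuous (fun t => U mu0 u (s t) (r t)).
Proof.
move=> s_cont r_cont.
apply: continuous_sum => w; apply: continuous_sum => m; apply: continuous_sum => a t.
apply: (@continuousM _ _ (fun t => mu0 w * s t w m * r t m a) (fun=> u a w));
  last exact: cst_continuous.
apply: (@continuousM _ _ (fun t => mu0 w * s t w m) (fun t => r t m a)); last exact: r_cont.
by apply: (@continuousM _ _ (fun=> mu0 w)); [exact: cst_continuous | exact: s_cont].
Qed.

Let equilibria : set vec := [set v | cheap_talk_eq mu0 uS uR (sigma_of v) (rho_of v)].

Lemma closed_equilibria : closed equilibria.
Proof.
have sigma_cont w m : continuous (fun v : vec => sigma_of v w m) by apply: coord_continuous.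
have rho_cont m a : continuous (fun v : vec => rho_of v m a) by apply: coord_continuous.
have -> : equilibria =
    [set v | forall w, is_dist (sigma_of v w)] `&` [set v | forall m, is_dist (rho_of v m)] `&`
    [set v | forall s, msg_strat s -> U mu0 uS s (rho_of v) <= U mu0 uS (sigma_of v) (rho_of v)] `&`
    [set v | forall r, act_strat r -> U mu0 uR (sigma_of v) r <= U mu0 uR (sigma_of v) (rho_of v)].
  by apply/seteqP; split=> v /=; [case=> [[? ? ?] [_ _ ?]] | case=> [[[? ?] ?] ?]].
repeat apply: closedI; try exact: closed_is_dist_family.
- by apply: (closed_le_family (f := fun s v => U mu0 uS s (rho_of v))) => s;
    apply: continuous_U => *; first [exact: cst_continuous | exact: rho_cont | exact: sigma_cont].
- by apply: (closed_le_family (f := fun r v => U mu0 uR (sigma_of v) r)) => r;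
    apply: continuous_U => *; first [exact: cst_continuous | exact: rho_cont | exact: sigma_cont].
Qed.

Lemma compact_equilibria : compact equilibria.
Proof.
have box_compact : compact [set v : vec | forall i, `[(0 : R), 1]%classic (v ord0 i)].
  by apply: (@rV_compact _ _ (fun=> `[(0 : R), 1]%classic)) => i; apply: segment_compact.
apply: subclosed_compact closed_equilibria box_compact _.
move=> v [[sigma_msg rho_act _] _] i /=; rewrite in_itv /=.
case: (enum_val i) (enum_valK i) => [[w m]|[m a]] <-.
- by rewrite (sigma_msg w).1 (is_dist_le1 _ (sigma_msg w)).
- by rewrite (rho_act m).1 (is_dist_le1 _ (rho_act m)).
Qed.

Lemma optimal_equilibrium_exists : exists (sigma : Om -> M -> R) (rho : M -> A -> R),
  cheap_talk_eq mu0 uS uR sigma rho /\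
  forall (sigma' : Om -> M -> R) (rho' : M -> A -> R), cheap_talk_eq mu0 uS uR sigma' rho' ->
    U mu0 uS sigma' rho' <= U mu0 uS sigma rho.
Proof.
have [sigma0 [rho0 babbling]] := babbling_equilibrium.
have equilibria_ne0 : equilibria !=set0.
  by exists (vec_of sigma0 rho0); rewrite /equilibria /= sigma_ofK rho_ofK.
have U_cont : continuous (fun v : vec => U mu0 uS (sigma_of v) (rho_of v)).
  by apply: continuous_U => *; apply: coord_continuous.
have [v v_eq v_max] := compact_EVT_max equilibria_ne0 compact_equilibria
  (continuous_subspaceT U_cont).
exists (sigma_of v), (rho_of v); split=> [|sigma' rho' eq']; first by rewrite in_setE in v_eq.
have := v_max (vec_of sigma' rho'); rewrite sigma_ofK rho_ofK; apply.
by rewrite in_setE /equilibria /= sigma_ofK rho_ofK.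
Qed.

End OptimalEquilibriumExists.

Unset Implicit Arguments.

Theorem proposition1 (R : realType) (A Om M : finType)
  (hA : (0 < #|A|)%N) (hOm : (0 < #|Om|)%N)
  (hM : (maxn #|Om| #|A| < #|M|)%N)
  (mu0 : Om -> R) (hmu_pos : forall w, 0 < mu0 w) (hmu_sum : \sum_(w : Om) mu0 w = 1)
  (uS uR : A -> Om -> R)
  (huS : forall a w, 0 <= uS a w <= 1) (huR : forall a w, 0 <= uR a w <= 1)
  (hscant : scant_indifferences uS uR)
  (hnovalue : persuasion_payoff M mu0 uS uR = cheap_talk_payoff M mu0 uS uR) :
  exists (sigma : Om -> M -> R) (rho : M -> A -> R),
    [/\ partitional sigma, pure_strat rho, cheap_talk_eq mu0 uS uR sigma rho,
        U mu0 uS sigma rho = persuasion_payoff M mu0 uS uR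
      & (#|used_msgs sigma| <= #|A|)%N].
Proof.
have /card_gt0P [a0 _] := hA.
have /card_gt0P [w0 _] := hOm.
have card_A_le_M : (#|A| <= #|M|)%N by rewrite ltnW // (leq_ltn_trans (leq_maxr _ _) hM).
have /card_gt0P [m0 _] : (0 < #|M|)%N by apply: leq_trans hA card_A_le_M.
have [sigma [rho [eq_CT eq_max]]] := optimal_equilibrium_exists mu0 uS uR a0 m0.
have V_ub (sigma' : Om -> M -> R) (rho' : M -> A -> R) : R_BR mu0 uR sigma' rho' ->
    U mu0 uS sigma' rho' <= persuasion_payoff M mu0 uS uR.
  move=> RBR'; apply: sup_upper_bound; last by exists sigma', rho'.
  split; first by exists (U mu0 uS sigma rho), sigma, rho; split=> //; case: eq_CT.
  exists 1 => _ [s [r [[s_msg r_act _] ->]]].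
  by apply: U_le1 => // [w|a w]; [exact: ltW | case/andP: (huS a w)].
have eq_V : U mu0 uS sigma rho = persuasion_payoff M mu0 uS uR.
  rewrite hnovalue; symmetry; apply: sup_eq_max; first by exists sigma, rho.
  by move=> _ [s [r [eq' ->]]]; apply: eq_max.
exact: (optimal_equilibrium_simplified a0 card_A_le_M hmu_pos huR hscant V_ub eq_CT eq_V w0).
Qed.
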